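(* Every connected $3$-regular graph of order at least $8$ has an independent minimum vertex cut.
   Context: All graphs are finite and simple. A vertex cut of a connected graph $G$ is a set $S\subset V(G)$ such that $G-S$ is disconnected. If $G$ has connectivity $k$, a vertex cut $S$ is called minimum if $|S|=k$. A vertex cut $S$ is called an independent vertex cut if $S$ is an independent set of $G$. *)

From mathcomp Require Import all_boot.
Set Implicit Arguments. Unset Strict Implicit. Unset Printing Implicit Defensive.

Definition simple_graph (T : finType) (e : rel T) : Prop :=
  symmetric e /\ irreflexive e.

Definition connected_graph (T : finType) (e : rel T) : Prop :=
  forall x y : T, connect e x y.

Definition regular (T : finType) (e : rel T) (d : nat) : Prop :=
  forall x : T, #|[set y | e x y]| = d.

Definition del_rel (T : finType) (e : rel T) (S : {set T}) : rel T :=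
  [rel x y | [&& e x y, x \notin S & y \notin S]].

Definition vertex_cut (T : finType) (e : rel T) (S : {set T}) : Prop :=
  exists x y : T, [/\ x \notin S, y \notin S & ~~ connect (del_rel e S) x y].

Definition min_vertex_cut (T : finType) (e : rel T) (S : {set T}) : Prop :=
  vertex_cut e S /\ forall S' : {set T}, vertex_cut e S' -> #|S| <= #|S'|.

Definition independent (T : finType) (e : rel T) (S : {set T}) : Prop :=
  forall x y, x \in S -> y \in S -> ~~ e x y.

From mathcomp Require Import all_boot.

(* Every neighbourhood N(v) is a vertex cut, so the connectivity k is at most 3, and
   for k <= 1 any minimum cut is independent.  Call X sealed by S when every edge from
   X \ S ends in X u S; then S separates X \ S from the vertices outside X u S.
   If k = 2 and the minimum cut {u, v} is an edge, both u and v have exactly one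
   neighbour, u1 and v1, in the component X of some vertex of G - {u, v}.  These differ
   (otherwise u1 would be a cut vertex), and trading v for v1 keeps X sealed, so {u, v1}
   is an independent minimum cut.
   If k = 3 and no N(v) is independent, every vertex lies in a triangle.  As k = 3 forbids
   four vertices attached to the rest through only two vertices, an edge lies in at most
   one triangle and the outer neighbours a', b', c' of a triangle abc are pairwise
   non-adjacent; {a', b', c'} then seals off the triangle from the remaining vertices. *)

Set Implicit Arguments. Unset Strict Implicit. Unset Printing Implicit Defensive.

Section Cuts.
Variables (T : finType) (e : rel T).
Hypothesis e_sym : symmetric e.

Definition nbhd (x : T) : {set T} := [set y | e x y].

Definition sealed (S X : {set T}) : Prop :=
  forall z, z \in X :\: S -> nbhd z \subset X :|: S.

Definition component (S : {set T}) (x : T) : {set T} :=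
  [set z | z \notin S & connect (del_rel e S) x z].

Lemma card_le_size (A : {set T}) (s : seq T) : {subset A <= s} -> #|A| <= size s.
Proof. by move=> sAs; apply: leq_trans (card_size s); apply/subset_leq_card/subsetP. Qed.

Lemma exists_notin (A : {set T}) : #|A| < #|T| -> exists y, y \notin A.
Proof.
move=> ltAT; have /card_gt0P[y]: 0 < #|~: A| by rewrite -(ltn_add2l #|A|) addn0 cardsC.
by rewrite inE; exists y.
Qed.

Lemma sealed_cut S X x y : sealed S X -> x \in X :\: S -> y \notin X :|: S ->
  vertex_cut e S.
Proof.
move=> sealX xXS; rewrite inE negb_or => /andP[yX yS].
exists x, y; split=> //; first by case/setDP: xXS.
have clX : closed (del_rel e S) (X :\: S).
  apply: intro_closed => [|z w /and3P[zw _ wS] zXS].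
    apply: sym_connect_sym => z w; rewrite /del_rel /= e_sym.
    by case: (z \in S); case: (w \in S); rewrite ?andbF.
  have /subsetP/(_ w) := sealX z zXS.
  by rewrite !inE zw (negbTE wS) orbF /=; apply.
apply/negP => /(closed_connect clX); rewrite xXS => /esym/setDP[yX' _].
by rewrite yX' in yX.
Qed.

Lemma sealed_small_cut S X x s : sealed S X -> x \in X :\: S ->
  {subset X :|: S <= s} -> size s < #|T| -> vertex_cut e S.
Proof.
move=> sealX xXS sub lt_sT; have [y yXS] := exists_notin (leq_ltn_trans (card_le_size sub) lt_sT).
exact: sealed_cut sealX xXS yXS.
Qed.

Lemma sealed_component S x : sealed S (component S x).
Proof.
move=> z /setDP[]; rewrite inE => /andP[zS xz] _; apply/subsetP=> w; rewrite inE => zw.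
rewrite !inE orbC; case: (boolP (w \in S)) => //= wS.
by apply: connect_trans xz (connect1 _); rewrite /del_rel /= zw zS.
Qed.

Lemma sealed_compl S X : sealed S X -> sealed S (~: (X :|: S)).
Proof.
move=> sealX z /setDP[]; rewrite inE => zXS zS; apply/subsetP=> w; rewrite inE => zw.
rewrite in_setU in_setC orbC; case: (boolP (w \in S)) => //= wS.
apply: contra zXS; rewrite in_setU (negbTE wS) orbF => wX.
by have /subsetP := sealX w (introT setDP (conj wX wS)); apply; rewrite inE e_sym.
Qed.

Definition vertex_cutb (S : {set T}) : bool :=
  [exists x, exists y, [&& x \notin S, y \notin S & ~~ connect (del_rel e S) x y]].

Lemma vertex_cutP S : reflect (vertex_cut e S) (vertex_cutb S).
Proof.
apply: (iffP existsP) => [[x /existsP[y /and3P[xS yS nxy]]]|[x [y [xS yS nxy]]]].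
  by exists x, y.
by exists x; apply/existsP; exists y; rewrite xS yS.
Qed.

Lemma exists_min_vertex_cut S : vertex_cut e S -> exists S0, min_vertex_cut e S0.
Proof.
move=> /vertex_cutP cutS.
have [S0 /vertex_cutP cutS0 minS0] := @arg_minnP _ S vertex_cutb (fun S => #|S|) cutS.
by exists S0; split=> // S' /vertex_cutP; apply: minS0.
Qed.

Lemma sealed_swap u v v1 X : sealed [set u; v] X -> v \notin X ->
  (forall z, z \in X -> e v z -> z = v1) -> sealed [set u; v1] X.
Proof.
move=> sealX vX soleX z /setDP[zX]; rewrite !inE negb_or => /andP[zu zv1].
have zXS : z \in X :\: [set u; v].
  by rewrite !inE negb_or zu zX andbT; apply: contraNneq vX => <-.
apply/subsetP=> w zw; move/subsetP/(_ w zw): (sealX z zXS); rewrite !inE.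
case/orP=> [->|/orP[->|/eqP wv]]; rewrite ?orbT //.
by move: zw; rewrite wv inE e_sym => /(soleX z zX) zv1E; rewrite zv1E eqxx in zv1.
Qed.

End Cuts.

Section Cubic.
Variables (T : finType) (e : rel T).
Hypotheses (e_sym : symmetric e) (e_irr : irreflexive e) (e_cubic : regular e 3).

Lemma adj_neq x y : e x y -> x != y.
Proof. by apply: contraTneq => ->; rewrite e_irr. Qed.

Lemma nbhd_cubic x a b c : e x a -> e x b -> e x c -> a != b -> a != c -> b != c ->
  nbhd e x = [set a; b; c].
Proof.
move=> xa xb xc ab ac bc; apply/esym/eqP; rewrite eqEcard !subUset !sub1set !inE xa xb xc.
by rewrite [#|nbhd e x|]e_cubic -setUA cardsU1 cards2 !inE negb_or ab ac bc.
Qed.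

Lemma adj_cubic x a b c : e x a -> e x b -> e x c -> a != b -> a != c -> b != c ->
  forall w, e x w = [|| w == a, w == b | w == c].
Proof.
move=> xa xb xc ab ac bc w.
by have /setP/(_ w) := nbhd_cubic xa xb xc ab ac bc; rewrite !inE -!orbA.
Qed.

Lemma third_neighbour x a b : exists2 c, e x c & (a != c) && (b != c).
Proof.
have : 0 < #|nbhd e x :\: [set a; b]|.
  rewrite cardsD [#|nbhd e x|]e_cubic subn_gt0 ltnS.
  by apply: leq_trans (subset_leq_card (subsetIr _ _)) _; rewrite cards2; case: (a != b).
case/card_gt0P=> c; rewrite !inE negb_or => /andP[/andP[ca cb] xc].
by exists c; rewrite // ![_ == c]eq_sym ca.
Qed.

Lemma nbhd_cut v : 4 < #|T| -> vertex_cut e (nbhd e v).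
Proof.
move=> order_gt4; have [y yN] : exists y, y \notin v |: nbhd e v.
  by apply: exists_notin; rewrite cardsU1 [#|nbhd e v|]e_cubic inE e_irr.
apply: (sealed_cut e_sym (X := [set v]) (x := v)) yN.
  by move=> z /setDP[]; rewrite inE => /eqP-> _; apply: subsetUr.
by rewrite !inE eqxx e_irr.
Qed.

Lemma independent2 a b : ~~ e a b -> independent e [set a; b].
Proof. by move=> ab x y; rewrite !inE => /orP[]/eqP-> /orP[]/eqP->; rewrite ?e_irr // e_sym. Qed.

Lemma independent3 a b c : ~~ e a b -> ~~ e a c -> ~~ e b c -> independent e [set a; b; c].
Proof.
move=> ab ac bc x y; rewrite !inE -!orbA => /or3P[]/eqP-> /or3P[]/eqP->;
  by rewrite ?e_irr // e_sym.
Qed.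

Section ConnectivityTwo.
Hypothesis cut_gt1 : forall S, vertex_cut e S -> 1 < #|S|.

Lemma neighbour_in_side X x p q : sealed e [set q; p] X -> x \in X ->
  p \notin X -> q \notin X -> p != q -> exists2 p1, p1 \in X & e p p1.
Proof.
move=> sealX xX pX qX pq.
have [p1 /andP[p1X pp1]|none] := pickP [pred z in X | e p z]; first by exists p1.
suff /cut_gt1 : vertex_cut e [set q; q] by rewrite setUid cards1.
apply: (sealed_cut e_sym (x := x) (y := p) (sealed_swap e_sym sealX pX (v1 := q) _)).
- by move=> z zX pz; have := none z; rewrite /= zX pz.
- by rewrite !inE xX orbb andbT; apply: contraNneq qX => <-.
- by rewrite !inE (negbTE pX) orbb.
Qed.

Lemma no_sole_common_neighbour X u v w : sealed e [set u; v] X ->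
  u \notin X -> v \notin X -> w \in X -> e u w -> e v w ->
  (forall z, z \in X -> e u z -> z = w) -> (forall z, z \in X -> e v z -> z = w) -> False.
Proof.
move=> sealX uX vX wX uw vw soleu solev.
have sealXw : sealed e [set w; w] X.
  have sealXuw : sealed e [set w; u] X.
    by rewrite setUC; apply: (sealed_swap e_sym sealX vX solev).
  exact: (sealed_swap e_sym sealXuw uX soleu).
have [c wc /andP[uc vc]] := third_neighbour w u v.
have cX : c \in X.
  have wXS : w \in X :\: [set u; v].
    rewrite !inE wX negb_or andbT.
    by apply/andP; split; [apply: contraNneq uX | apply: contraNneq vX] => <-.
  move/subsetP/(_ c): (sealX w wXS).
  by rewrite !inE wc ![c == _]eq_sym (negbTE uc) (negbTE vc) !orbF; apply.
suff /cut_gt1 : vertex_cut e [set w; w] by rewrite setUid cards1.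
apply: (sealed_cut e_sym sealXw (x := c) (y := u)).
  by rewrite !inE cX orbb andbT eq_sym adj_neq.
by rewrite !inE (negbTE uX) orbb; apply: contraNneq uX => ->.
Qed.

Lemma adjacent_cut2 u v : e u v -> vertex_cut e [set u; v] ->
  exists S, [/\ vertex_cut e S, independent e S & #|S| <= 2].
Proof.
move=> uv [x [y [xS yS nxy]]].
set S := [set u; v]; set X := component e S x; set Y := ~: (X :|: S).
have sealX : sealed e S X by apply: sealed_component.
have sealY : sealed e S Y := sealed_compl e_sym sealX.
have sealX' : sealed e [set v; u] X by rewrite setUC.
have sealY' : sealed e [set v; u] Y by rewrite setUC.
have xX : x \in X by rewrite inE xS connect0.
have yY : y \in Y by rewrite in_setC in_setU negb_or yS andbT inE negb_and nxy orbT.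
have [uS vS] : u \in S /\ v \in S by rewrite !inE !eqxx orbT.
have SX z : z \in S -> z \notin X by move=> zS; rewrite inE zS.
have SY z : z \in S -> z \notin Y by move=> zS; rewrite in_setC in_setU zS orbT.
have YX z : z \in Y -> z \notin X by rewrite in_setC in_setU negb_or => /andP[].
have vu : v != u by rewrite eq_sym adj_neq.
have [u1 u1X uu1] := neighbour_in_side sealX' xX (SX u uS) (SX v vS) (adj_neq uv).
have [v1 v1X vv1] := neighbour_in_side sealX xX (SX v vS) (SX u uS) vu.
have [u2 u2Y uu2] := neighbour_in_side sealY' yY (SY u uS) (SY v vS) (adj_neq uv).
have [v2 v2Y vv2] := neighbour_in_side sealY yY (SY v vS) (SY u uS) vu.
have sole p q p1 p2 : q \in S -> e p q -> e p p1 -> e p p2 -> p1 \in X -> p2 \in Y ->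
    forall z, z \in X -> e p z -> z = p1.
  move=> qS pq pp1 pp2 p1X p2Y z zX; rewrite (adj_cubic pq pp1 pp2).
  - case/or3P=> /eqP zE //; rewrite zE in zX.
      by have := SX q qS; rewrite zX.
    by have := YX p2 p2Y; rewrite zX.
  - by apply: contraNneq (SX q qS) => ->.
  - by apply: contraNneq (SY q qS) => ->.
  - by apply: contraNneq (YX p2 p2Y) => <-.
have vu' : e v u by rewrite e_sym.
have soleu := sole u v u1 u2 vS uv uu1 uu2 u1X u2Y.
have solev := sole v u v1 v2 uS vu' vv1 vv2 v1X v2Y.
have [u1v1E|u1v1] := eqVneq u1 v1.
  rewrite -u1v1E in vv1 solev.
  by case: (no_sole_common_neighbour sealX (SX u uS) (SX v vS) u1X uu1 vv1 soleu solev).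
exists [set u; v1]; split.
- apply: (sealed_cut e_sym (sealed_swap e_sym sealX (SX v vS) solev) (x := u1) (y := v)).
    rewrite in_setD u1X andbT !in_setU !in_set1 negb_or u1v1 andbT.
    by apply: contraNneq (SX u uS) => <-.
  rewrite in_setU (negbTE (SX v vS)) !in_setU !in_set1 /= negb_or vu.
  by apply: contraNneq (SX v vS) => ->.
- by apply: independent2; apply/negP => /(soleu v1 v1X) v1u1; rewrite v1u1 eqxx in u1v1.
- by rewrite cards2; case: (u != v1).
Qed.

Lemma independent_cut2 S : vertex_cut e S -> #|S| = 2 ->
  exists S', [/\ vertex_cut e S', independent e S' & #|S'| <= 2].
Proof.
move=> cutS /eqP/cards2P[u [v [uv defS]]]; rewrite defS in cutS.
have [euv|neuv] := boolP (e u v); first exact: adjacent_cut2 euv cutS.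
by exists [set u; v]; split; [| exact: independent2 | rewrite cards2 uv].
Qed.

End ConnectivityTwo.

Section ConnectivityThree.
Hypotheses (cut_gt2 : forall S, vertex_cut e S -> 2 < #|S|) (order_gt7 : 7 < #|T|).

Lemma quad_attachments_gt2 a b c d s t : a \notin [set s; t] ->
  (forall z, z \in [set a; b; c; d] -> nbhd e z \subset [set a; b; c; d] :|: [set s; t]) ->
  False.
Proof.
move=> aS sealQ.
suff /cut_gt2 : vertex_cut e [set s; t] by rewrite cards2; case: (s != t).
apply: (sealed_small_cut e_sym (x := a) (s := [:: a; b; c; d; s; t])).
- by move=> z /setDP[zQ _]; apply: sealQ.
- by rewrite in_setD aS !inE eqxx.
- by move=> z; rewrite !inE -!orbA.
- exact: ltnW.
Qed.

Lemma common_neighbour_uniq a b c d : e a b -> e a c -> e b c -> e a d -> e b d -> c = d.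
Proof.
move=> ab ac bc ad bd; apply/eqP/negPn/negP => cd.
have [c' cc' /andP[ac' bc']] := third_neighbour c a b.
have [d' dd' /andP[ad' bd']] := third_neighbour d a b.
have [ba ca cb da db] : [/\ e b a, e c a, e c b, e d a & e d b] by split; rewrite e_sym.
apply: (@quad_attachments_gt2 a b c d c' d'); first by rewrite !inE negb_or ac' ad'.
move=> z; rewrite !inE -!orbA => /or4P[]/eqP->.
- by rewrite (nbhd_cubic ab ac ad (adj_neq bc) (adj_neq bd) cd) !subUset !sub1set !inE !eqxx ?orbT.
- by rewrite (nbhd_cubic ba bc bd (adj_neq ac) (adj_neq ad) cd) !subUset !sub1set !inE !eqxx ?orbT.
- by rewrite (nbhd_cubic ca cb cc' (adj_neq ab) ac' bc') !subUset !sub1set !inE !eqxx ?orbT.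
- by rewrite (nbhd_cubic da db dd' (adj_neq ab) ad' bd') !subUset !sub1set !inE !eqxx ?orbT.
Qed.

Lemma outer_neighbours_nonadj a b c a' b' :
  e a b -> e a c -> e b c -> e a a' -> e b b' -> b != a' -> c != a' -> a != b' -> c != b' ->
  (exists s t, [/\ e a' s, e a' t & e s t]) -> ~~ e a' b'.
Proof.
move=> ab ac bc aa' bb' ba' ca' ab' cb' [s [t [a's a't st]]]; apply/negP => a'b'.
(* The triangle at a' would have to be a' b' p, and then {c, p} would be the only
   attachments of {a, b, a', b'}. *)
have [p a'p /andP[ap b'p]] := third_neighbour a' a b'.
have [ba cb a'a b'b b'a'] : [/\ e b a, e c b, e a' a, e b' b & e b' a'] by split; rewrite e_sym.
have nab' : ~~ e a b'.
  by apply: contraNN cb' => eab'; rewrite (common_neighbour_uniq ab ac bc eab' bb').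
have bp : b != p.
  apply: contraNneq ca' => bp; apply/eqP.
  by apply: (common_neighbour_uniq ab ac bc aa'); rewrite bp e_sym.
have nap : ~~ e a p.
  rewrite (adj_cubic ab ac aa' (adj_neq bc) ba' ca') ![p == _]eq_sym (negbTE bp).
  rewrite (negbTE (adj_neq a'p)) orbF /=; apply: contraNneq ba' => cp; apply/eqP.
  by apply: (common_neighbour_uniq ac ab cb aa'); rewrite e_sym cp.
have nb'p : ~~ e b' p.
  apply/negP => b'p'; apply: (@quad_attachments_gt2 a b a' b' c p).
    by rewrite !inE negb_or (adj_neq ac).
  move=> z; rewrite !inE -!orbA => /or4P[]/eqP->.
  - by rewrite (nbhd_cubic ab ac aa' (adj_neq bc) ba' ca') !subUset !sub1set !inE !eqxx ?orbT.
  - by rewrite (nbhd_cubic ba bc bb' (adj_neq ac) ab' cb') !subUset !sub1set !inE !eqxx ?orbT.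
  - by rewrite (nbhd_cubic a'a a'b' a'p ab' ap b'p) !subUset !sub1set !inE !eqxx ?orbT.
  - by rewrite (nbhd_cubic b'b b'a' b'p' ba' bp (adj_neq a'p)) !subUset !sub1set !inE !eqxx ?orbT.
move: a's a't st; rewrite !(adj_cubic a'a a'b' a'p ab' ap b'p).
by move=> /or3P[]/eqP-> /or3P[]/eqP->; apply/negP; rewrite ?e_irr // e_sym.
Qed.

Lemma independent_cut3 : exists S, [/\ vertex_cut e S, independent e S & #|S| <= 3].
Proof.
have [/existsP[v /forallP indepN]|] :=
  boolP [exists v, [forall s, forall t, e v s ==> e v t ==> ~~ e s t]].
  exists (nbhd e v); split; last by rewrite [#|nbhd e v|]e_cubic.
    by apply: nbhd_cut; apply: (@leq_trans 8).
  by move=> s t; rewrite !inE => vs vt; have /forallP/(_ t) := indepN s; rewrite vs vt.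
rewrite negb_exists => /forallP no_indepN.
have triangle v : exists s t, [/\ e v s, e v t & e s t].
  have /forallPn[s /forallPn[t]] := no_indepN v.
  by rewrite !negb_imply andbT => /and3P[vs vt st]; exists s, t.
have /card_gt0P[a _] : 0 < #|T| by apply: (@leq_trans 8).
have [b [c [ab ac bc]]] := triangle a.
have [a' aa' /andP[ba' ca']] := third_neighbour a b c.
have [b' bb' /andP[ab' cb']] := third_neighbour b a c.
have [c' cc' /andP[ac' bc']] := third_neighbour c a b.
have [ba ca cb] : [/\ e b a, e c a & e c b] by split; rewrite e_sym.
have na'b' := outer_neighbours_nonadj ab ac bc aa' bb' ba' ca' ab' cb' (triangle a').
have na'c' := outer_neighbours_nonadj ac ab cb aa' cc' ca' ba' ac' bc' (triangle a').
have nb'c' := outer_neighbours_nonadj bc ba ca bb' cc' cb' ab' bc' ac' (triangle b').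
exists [set a'; b'; c']; split; last 2 first.
- exact: independent3.
- by apply: (@card_le_size _ _ [:: a'; b'; c']) => z; rewrite !inE -!orbA.
apply: (sealed_small_cut e_sym (X := [set a; b; c]) (x := a) (s := [:: a; b; c; a'; b'; c'])).
- move=> z /setDP[]; rewrite !inE -!orbA => /or3P[]/eqP-> _.
  + by rewrite (nbhd_cubic ab ac aa' (adj_neq bc) ba' ca') !subUset !sub1set !inE !eqxx ?orbT.
  + by rewrite (nbhd_cubic ba bc bb' (adj_neq ac) ab' cb') !subUset !sub1set !inE !eqxx ?orbT.
  + by rewrite (nbhd_cubic ca cb cc' (adj_neq ab) ac' bc') !subUset !sub1set !inE !eqxx ?orbT.
- by rewrite !inE eqxx (negbTE (adj_neq aa')) (negbTE ab') (negbTE ac').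
- by move=> z; rewrite !inE -!orbA.
- exact: ltnW.
Qed.

End ConnectivityThree.

End Cubic.

Theorem lemma6 (T : finType) (e : rel T) :
  simple_graph e -> connected_graph e -> regular e 3 -> 8 <= #|T| ->
  exists S : {set T}, min_vertex_cut e S /\ independent e S.
Proof.
move=> [e_sym e_irr] _ e_cubic order_ge8.
have /card_gt0P[v _] : 0 < #|T| by apply: leq_trans order_ge8.
have cutN : vertex_cut e (nbhd e v).
  by apply: (nbhd_cut e_sym e_irr e_cubic); apply: leq_trans order_ge8.
have [S0 [cutS0 minS]] := exists_min_vertex_cut cutN.
suff [S [cutS indS leS]] : exists S, [/\ vertex_cut e S, independent e S & #|S| <= #|S0|].
  by exists S; split=> //; split=> // S' /minS; apply: leq_trans.
have [le1|gt1] := leqP #|S0| 1.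
  by exists S0; split=> // x y xS yS; rewrite (card_le1_eqP le1 x y xS yS) e_irr.
have [eq2|ne2] := eqVneq #|S0| 2.
  rewrite eq2; apply: (independent_cut2 e_sym e_irr e_cubic _ cutS0 eq2).
  by move=> S /minS; apply: leq_trans.
have gt2 : 2 < #|S0| by rewrite ltn_neqAle eq_sym ne2 gt1.
have -> : #|S0| = 3 by apply/eqP; rewrite eqn_leq gt2 -(e_cubic v) minS.
by apply: independent_cut3 => // S /minS; apply: leq_trans.
Qed.
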